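(* Let $X\subset\mathbb{R}^n$ be a closed set which is the closure of its interior, let $f:X\to\mathbb{R}^n$ be locally Lipschitz, and consider $\dot x=f(x)$ with flow $\varphi_t$, assumed forward complete: for each $\xi\in X$ the solution $\varphi_t(\xi)$ is uniquely maximally defined (in $X$) on an interval $I_\xi\subset\mathbb{R}$ containing $[0,+\infty)$ in its interior. Let $K\subset\mathbb{R}^n$ be a closed convex cone with nonempty interior, and suppose the system is strongly monotone: for all $\xi_1,\xi_2\in X$, $\xi_1\succ\xi_2$ implies $\varphi_t(\xi_1)\gg\varphi_t(\xi_2)$ for all $t>0$. Suppose there is $v\in\operatorname{int}(K)$ with $|v|=1$ such that $X$ is invariant under translation by $v$ (i.e. $x\in X\Rightarrow x+\lambda v\in X$ for all $\lambda\in\mathbb{R}$) and the flow is translation invariant: $\varphi_t(\xi+\lambda v)=\varphi_t(\xi)+\lambda v$ for all $\lambda\in\mathbb{R}$, all $\xi\in X$ and all $t$ at which $\varphi_t(\xi)$ is defined. Let $\pi_v(x)=x-(v'x)v$. Then for every $\xi\in X$ such that $t\mapsto\pi_v(\varphi_t(\xi))$ is bounded on $[0,\infty)$, $\pi_v(\varphi_t(\xi))$ converges as $t\to+\infty$ to an equilibrium of the projected system $\dot{\tilde x}=(I-vv')f(\tilde x)$ on $\tilde X=X\cap v^{\perp}$. Moreover, this equilibrium is unique: the projected system has no other equilibrium.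
   Context: The cone $K$ satisfies $K+K\subset K$, $\alpha K\subset K$ for $\alpha\ge 0$, $K\cap(-K)=\{0\}$. Orders: $\xi_1\succeq\xi_2$ iff $\xi_1-\xi_2\in K$; $\xi_1\succ\xi_2$ iff $\xi_1\succeq\xi_2$ and $\xi_1\ne\xi_2$; $\xi_1\gg\xi_2$ iff $\xi_1-\xi_2\in\operatorname{int}(K)$. Prime denotes transpose; $\pi_v$ is the orthogonal projection onto $v^\perp$. *)

From HB Require Import structures.
From mathcomp Require Import all_boot all_order all_algebra.
From mathcomp Require Import all_classical all_reals all_analysis.
Set Implicit Arguments. Unset Strict Implicit. Unset Printing Implicit Defensive.
Import Order.TTheory GRing.Theory Num.Theory.
Import numFieldNormedType.Exports.
Local Open Scope classical_set_scope.
Local Open Scope ring_scope.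

Section Defs.
Variables (R : realType) (n : nat).
Local Notation V := 'rV[R]_n.

Definition dotv (u w : V) : R := (u *m w^T) 0 0.

Definition pi_v (v x : V) : V := x - dotv v x *: v.

(* the projected vector field (I - v v') f, written for row vectors *)
Definition proj_field (v : V) (f : V -> V) (x : V) : V :=
  f x *m (1%:M - v^T *m v).

Definition cone (K : set V) :=
  [/\ forall x y, K x -> K y -> K (x + y),
      forall (a : R) x, 0 <= a -> K x -> K (a *: x) &
      forall x, K x -> K (- x) -> x = 0].

Definition ord_ge (K : set V) (x y : V) := K (x - y).
Definition ord_gt (K : set V) (x y : V) := K (x - y) /\ x <> y.
Definition ord_gg (K : set V) (x y : V) := (interior K) (x - y).

Definition locally_lipschitz (X : set V) (f : V -> V) :=
  forall x, X x -> exists2 r : R, 0 < r & exists L : R,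
    forall y z, X y -> X z -> `|y - x| < r -> `|z - x| < r ->
      `|f y - f z| <= L * `|y - z|.

Definition is_itv (J : set R) :=
  forall a b c, J a -> J c -> a <= b -> b <= c -> J b.

(* y is a solution of x' = f(x) in X on the interval J
   (derivative taken within J, i.e. one-sided at endpoints of J) *)
Definition is_sol (X : set V) (f : V -> V) (J : set R) (y : R -> V) :=
  (forall t, J t -> X (y t)) /\
  forall t, J t ->
    (fun s => (s - t)^-1 *: (y s - y t)) @ within (fun s => J s /\ s <> t) (nbhs t)
      --> f (y t).

Definition forward_complete_flow (X : set V) (f : V -> V)
    (I : V -> set R) (phi : R -> V -> V) :=
  forall xi, X xi ->
    [/\ is_itv (I xi),
        `[0, +oo[ `<=` interior (I xi),
        phi 0 xi = xi,
        is_sol X f (I xi) (fun t => phi t xi) &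
        forall (J : set R) (y : R -> V), is_itv J -> J 0 -> y 0 = xi ->
          is_sol X f J y -> J `<=` I xi /\ (forall t, J t -> y t = phi t xi)].

End Defs.

From HB Require Import structures.
From mathcomp Require Import all_boot all_order all_algebra.
From mathcomp Require Import all_classical all_reals all_analysis.
From mathcomp Require Import ring lra.
Import Order.TTheory GRing.Theory Num.Theory.
Import numFieldNormedType.Exports.
Local Open Scope classical_set_scope.
Local Open Scope ring_scope.
Set Implicit Arguments. Unset Strict Implicit. Unset Printing Implicit Defensive.

(* Compare two states along v: [gap x y] is the least l with x + l v ⪰ y, and
   [osc x y = gap x y + gap y x].  Translation invariance makes [osc] invariant
   under shifts along v, monotonicity makes it nonincreasing along pairs of
   trajectories, and strong monotonicity makes it strictly decreasing unless the
   two states differ by a multiple of v.  The flow through an equilibrium of the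
   projected system drifts along v, so two such equilibria differ by a multiple
   of v and, both lying in v^⊥, coincide.  Along a trajectory with bounded
   projection, t |-> osc (φ_t ξ) (φ_(t+s) ξ) is nonincreasing, hence nearly
   constant at late times; this forces φ_s p ∈ p + ℝv at every ω-limit point p of
   the projected trajectory, so f p ∈ ℝv and p is a projected equilibrium.
   Compactness and uniqueness then give convergence. *)

Ltac mx_ring := apply/matrixP => ? ?; rewrite !mxE; ring.

Lemma closed_inf_mem (R : realType) (A : set R) : closed A -> has_inf A -> A (inf A).
Proof.
move=> clA infA; apply: clA => B /nbhs_ballP [d d0 dB].
have [l Al ltl] := inf_adherent d0 infA.
exists l; split => //; apply: dB; rewrite -ball_normE /= distrC ger0_norm.
  by rewrite ltrBlDl.
by rewrite subr_ge0; case: infA => _ lbA; apply: ge_inf.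
Qed.

Section Projection.
Variables (R : realType) (n : nat).
Implicit Types u v w x : 'rV[R]_n.

Lemma dotvD u w w' : dotv u (w + w') = dotv u w + dotv u w'.
Proof. by rewrite /dotv linearD /= mulmxDr mxE. Qed.

Lemma dotvZ u a w : dotv u (a *: w) = a * dotv u w.
Proof. by rewrite /dotv linearZ /= -scalemxAr mxE. Qed.

Lemma continuous_dotv u : continuous (dotv u).
Proof.
have -> : dotv u = fun w => \sum_(j < n) u 0 j * w 0 j.
  by apply: funext => w; rewrite /dotv mxE; apply: eq_bigr => j _; rewrite mxE.
apply: continuous_big => [|j _ w]; first exact: add_continuous.
exact: cvgMl_tmp (@coord_continuous R 1 n 0 j w).
Qed.

Lemma proj_fieldE v f x : proj_field v f x = pi_v v (f x).
Proof.
rewrite /proj_field /pi_v mulmxBr mulmx1 mulmxA; congr (_ - _).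
rewrite {1}[f x *m v^T]mx11_scalar mul_scalar_mx; congr (_ *: _).
by rewrite /dotv -[f x *m _]trmxK trmx_mul trmxK mxE.
Qed.

Variable v : 'rV[R]_n.
Hypothesis unit_v : dotv v v = 1.

Lemma unit_neq0 : v != 0.
Proof. by apply: contra_eq_neq unit_v => ->; rewrite /dotv mul0mx mxE eq_sym oner_neq0. Qed.

Lemma dotv_pi_v x : dotv v (pi_v v x) = 0.
Proof. by rewrite /pi_v -scaleNr dotvD dotvZ unit_v mulr1 addrN. Qed.

Lemma pi_v_eq0 w : pi_v v w = 0 <-> exists c, w = c *: v.
Proof.
split=> [/eqP|[c ->]]; first by rewrite subr_eq0 => /eqP; exists (dotv v w).
by rewrite /pi_v dotvZ unit_v mulr1 subrr.
Qed.

End Projection.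

Lemma is_itv_shift (R : realType) (J : set R) s :
  is_itv J -> is_itv [set u | J (u + s)].
Proof. by move=> itvJ a b c Ja Jc ab bc; apply: (itvJ _ _ _ Ja Jc); rewrite lerD2r. Qed.

Lemma is_sol_shift (R : realType) n (X : set 'rV[R]_n) f (J : set R) y s :
  is_sol X f J y -> is_sol X f [set u | J (u + s)] (fun u => y (u + s)).
Proof.
move=> [yX yD]; split=> [u|u Ju]; first exact: yX.
have -> : (fun w => (w - u)^-1 *: (y (w + s) - y (u + s))) =
    (fun w => (w - (u + s))^-1 *: (y w - y (u + s))) \o (fun w => w + s).
  by apply: funext => w /=; rewrite opprD addrACA subrr addr0.
apply: cvg_comp (yD _ Ju) => P /=.
have shift_cvg : (fun w => w + s) @ nbhs u --> nbhs (u + s).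
  by apply: cvgD; [exact: cvg_id | exact: cvg_cst].
move=> /shift_cvg P_near.
suff : nbhs u (fun w => J (w + s) /\ w <> u -> P (w + s)) by [].
have P_near' : nbhs u (fun w => J (w + s) /\ w + s <> u + s -> P (w + s)) := P_near.
by apply: filterS P_near' => w Pw [Jw w_neq]; apply: Pw; split=> // /addIr.
Qed.

Section Flow.
Variables (R : realType) (n : nat) (X : set 'rV[R]_n) (f : 'rV[R]_n -> 'rV[R]_n).
Variables (I : 'rV[R]_n -> set R) (phi : R -> 'rV[R]_n -> 'rV[R]_n).
Hypothesis flowP : forward_complete_flow X f I phi.

Lemma flow_dom xi t : X xi -> 0 <= t -> I xi t.
Proof.
move=> /flowP [_ sub _ _ _] t_ge0; apply: interior_subset; apply: sub.
by rewrite /= in_itv /= t_ge0.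
Qed.

Lemma flow0 xi : X xi -> phi 0 xi = xi.
Proof. by move=> /flowP []. Qed.

Lemma flowX xi t : X xi -> 0 <= t -> X (phi t xi).
Proof. by move=> Xxi t_ge0; have [_ _ _ [solX _] _] := flowP Xxi; apply/solX/flow_dom. Qed.

Lemma flowD xi s t : X xi -> 0 <= s -> 0 <= t -> phi t (phi s xi) = phi (t + s) xi.
Proof.
move=> Xxi s_ge0 t_ge0; have [itvI _ _ sol _] := flowP Xxi.
have [_ _ _ _ uniq] := flowP (flowX Xxi s_ge0).
have J0 : I xi (0 + s) by rewrite add0r; apply: flow_dom.
have [_ <-] := uniq _ _ (is_itv_shift (s := s) itvI) J0 (congr1 (phi^~ xi) (add0r s))
  (is_sol_shift s sol) => //.
by apply: flow_dom; rewrite ?addr_ge0.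
Qed.

Lemma flow_right_deriv xi : X xi -> (fun s => s^-1 *: (phi s xi - xi)) @ 0^'+ --> f xi.
Proof.
move=> Xxi; have [_ _ phi0 [_ solD] _] := flowP Xxi.
have := solD 0 (flow_dom Xxi (lexx 0)) => /=; rewrite phi0.
under [q in q @ _ --> _ -> _]funext => s do rewrite subr0.
apply: cvg_comp; apply: within_subset => s /= s_gt0; split.
  exact/flow_dom/ltW.
by move=> s0; move: s_gt0; rewrite s0 ltxx.
Qed.

Variable v : 'rV[R]_n.
Hypothesis unit_v : dotv v v = 1.

Lemma span_f_of_flow p : X p -> (forall s, 0 < s -> exists k, phi s p = p + k *: v) ->
  exists c, f p = c *: v.
Proof.
move=> Xp on_line; exists (dotv v (f p)).
have quot := flow_right_deriv Xp.
apply: (cvg_unique _ quot) => /=; first exact: norm_hausdorff.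
have lim_dotv := cvg_comp _ _ quot (@continuous_dotv _ _ v (f p)).
apply: cvg_trans _ (cvgZr_tmp (a := v) lim_dotv); apply: near_eq_cvg; near=> s.
have s_gt0 : 0 < s by near: s; exact: nbhs_right_gt.
have [k phi_s] := on_line s s_gt0; rewrite /= phi_s.
have -> : p + k *: v - p = k *: v by mx_ring.
by rewrite !dotvZ unit_v mulr1 scalerA.
Unshelve. all: by end_near.
Qed.

End Flow.

Section TranslationInvariance.
Variables (R : realType) (n : nat) (X : set 'rV[R]_n) (f : 'rV[R]_n -> 'rV[R]_n).
Variables (I : 'rV[R]_n -> set R) (phi : R -> 'rV[R]_n -> 'rV[R]_n) (v : 'rV[R]_n).
Hypothesis flowP : forward_complete_flow X f I phi.
Hypothesis Xv : forall x (lam : R), X x -> X (x + lam *: v).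
Hypothesis flowv : forall xi (lam : R) t, X xi -> I xi t ->
  phi t (xi + lam *: v) = phi t xi + lam *: v.

Lemma flowDv xi a t : X xi -> 0 <= t -> phi t (xi + a *: v) = phi t xi + a *: v.
Proof. by move=> Xxi t_ge0; apply/flowv/(flow_dom flowP). Qed.

Lemma fDv x a : X x -> f (x + a *: v) = f x.
Proof.
move=> Xx; apply: (cvg_unique _ (flow_right_deriv flowP (Xv a Xx))) => /=.
  exact: norm_hausdorff.
apply: cvg_trans; last exact: (flow_right_deriv flowP Xx).
apply: near_eq_cvg; near=> s.
have s_gt0 : 0 < s by near: s; exact: nbhs_right_gt.
by rewrite flowDv ?ltW //; congr (_ *: _); mx_ring.
Unshelve. all: by end_near.
Qed.

Lemma flow_drift e c : X e -> f e = c *: v ->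
  forall t, 0 <= t -> phi t e = e + (c * t) *: v.
Proof.
move=> Xe fe t _; have [_ _ _ _ uniq] := flowP Xe.
have itvT : is_itv (@setT R) by [].
have line0 : e + (c * 0) *: v = e by rewrite mulr0 scale0r addr0.
suff sol : is_sol X f setT (fun t => e + (c * t) *: v).
  by have [_ /(_ t Logic.I) <-] := uniq _ _ itvT Logic.I line0 sol.
split=> [u _|u _]; first exact: Xv.
rewrite fDv // fe => P /nbhs_singleton P_cv.
suff : nbhs u (fun s => setT s /\ s <> u ->
    P ((s - u)^-1 *: (e + (c * s) *: v - (e + (c * u) *: v)))) by [].
apply: filterE => s [_ /eqP s_neq]; rewrite -subr_eq0 in s_neq.
have -> : e + (c * s) *: v - (e + (c * u) *: v) = ((s - u) * c) *: v by mx_ring.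
by rewrite scalerA mulrA mulVf ?mul1r.
Qed.

End TranslationInvariance.

Lemma cluster_pinfty (R : realType) (V : normedModType R) (g : R -> V) p :
  cluster (g @ +oo) p -> forall T e, 0 < e -> exists2 t, T <= t & `|g t - p| < e.
Proof.
move=> clp T e e_gt0.
have tail : (g @ +oo) [set q | exists2 t, T <= t & q = g t].
  by exists T; split; [exact: num_real | move=> t /ltW le_Tt; exists t].
have [_ [[t le_Tt ->] gt_near]] := clp _ _ tail (nbhsx_ballx p e e_gt0).
by exists t => //; move: gt_near; rewrite -ball_normE /= distrC.
Qed.

Lemma compact_norm_le (R : realType) n (B : R) : compact [set q : 'rV[R]_n | `|q| <= B].
Proof.
apply: bounded_closed_compact.
  exists B; split; first exact: num_real.
  by move=> C lt_BC q /= le_qB; apply: le_trans le_qB (ltW lt_BC).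
apply: (@preimage_closed _ _ (fun q : 'rV[R]_n => `|q|) [set x | x <= B]).
  by move=> q _; apply: norm_continuous.
exact: closed_le.
Qed.

Section StronglyMonotoneFlow.
Variables (R : realType) (n : nat) (K : set 'rV[R]_n) (v : 'rV[R]_n).
Hypotheses (coneK : cone K) (closedK : closed K) (Kv : interior K v) (v_neq0 : v != 0).

Lemma coneD x y : K x -> K y -> K (x + y).
Proof. by case: coneK => D _ _; apply: D. Qed.

Lemma coneZ (a : R) x : 0 <= a -> K x -> K (a *: x).
Proof. by case: coneK => _ Z _; apply: Z. Qed.

Lemma cone_pointed x : K x -> K (- x) -> x = 0.
Proof. by case: coneK => _ _ P; apply: P. Qed.

Lemma cone_v : K v.
Proof. exact: interior_subset. Qed.

Lemma cone_Nv c : c < 0 -> ~ K (c *: v).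
Proof.
move=> c_lt0 Kcv; have KNv : K (- v).
  have -> : - v = (- c^-1) *: (c *: v) by rewrite scalerA mulNr mulVf ?ltr0_neq0 // scaleN1r.
  by apply: coneZ => //; rewrite oppr_ge0 invr_le0 ltW.
by move/eqP: v_neq0; apply; apply: cone_pointed cone_v KNv.
Qed.

Lemma cone_absorb : exists2 r : R, 0 < r &
  forall e w, 0 < e -> `|w| < e * r -> K (w + e *: v).
Proof.
have /nbhs_ballP [r r_gt0 rK] := Kv; exists r => // e w e_gt0 w_lt.
have -> : w + e *: v = e *: (v + e^-1 *: w).
  by rewrite scalerDr scalerA mulfV ?gt_eqF // scale1r addrC.
apply: coneZ; first exact: ltW.
apply: rK; rewrite -ball_normE /= opprD addNKr normrN normrZ gtr0_norm ?invr_gt0 //.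
by rewrite mulrC ltr_pdivrMr // mulrC.
Qed.

Definition above x y := [set l : R | K (x + l *: v - y)].

Lemma above_sum_ge0 x y l m : above x y l -> above y x m -> 0 <= l + m.
Proof.
move=> Kl Km; rewrite leNgt; apply/negP => /cone_Nv; apply.
have -> : (l + m) *: v = (x + l *: v - y) + (y + m *: v - x) by mx_ring.
exact: coneD.
Qed.

Lemma above_neq0 x y : above x y !=set0.
Proof.
have [r r_gt0 absorb] := cone_absorb.
exists ((`|x - y| + 1) / r); rewrite /above /= addrAC.
by apply: absorb; rewrite ?divr_gt0 ?ltr_wpDl // divfK ?gt_eqF // ltrDl.
Qed.

Lemma has_inf_above x y : has_inf (above x y).
Proof.
split; first exact: above_neq0.
have [m Km] := above_neq0 y x; exists (- m) => l Kl.
by rewrite lerNl -subr_ge0 opprK addrC; apply: above_sum_ge0 Kl Km.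
Qed.

Definition gap x y := inf (above x y).

Lemma gap_le x y l : above x y l -> gap x y <= l.
Proof. by case: (has_inf_above x y) => _ lb; apply: ge_inf. Qed.

Lemma closed_above x y : closed (above x y).
Proof.
apply: (@preimage_closed _ _ (fun l : R => x + l *: v - y)) => // l _.
by apply: cvgB; [apply: cvgD; [apply: cvg_cst | apply: continuousZr_tmp] | apply: cvg_cst].
Qed.

Lemma gap_above x y : above x y (gap x y).
Proof. by apply: closed_inf_mem; [apply: closed_above | apply: has_inf_above]. Qed.

Lemma gapDv x y a b : gap (x + a *: v) (y + b *: v) = gap x y + b - a.
Proof.
have shift l : above (x + a *: v) (y + b *: v) l = above x y (l + a - b).
  by rewrite /above /=; congr K; mx_ring.
apply/eqP; rewrite eq_le; apply/andP; split.
  by apply: gap_le; rewrite shift subrK addrK; apply: gap_above.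
have := gap_above (x + a *: v) (y + b *: v); rewrite shift => /gap_le; lra.
Qed.

(* For K = R^n_+ and v = (1, ..., 1), [gap x y = max_i (y_i - x_i)] and
   [osc x y] is the oscillation max - min of y - x. *)
Definition osc x y := gap x y + gap y x.

Lemma oscDv x y a b : osc (x + a *: v) (y + b *: v) = osc x y.
Proof. by rewrite /osc !gapDv; lra. Qed.

Definition vclose e p q := K (q - p + e *: v) /\ K (p - q + e *: v).

Lemma vcloseC e p q : vclose e p q -> vclose e q p.
Proof. by case. Qed.

Lemma vclose_norm : exists2 r : R, 0 < r &
  forall e p q, 0 < e -> `|q - p| < e * r -> vclose e p q.
Proof.
have [r r_gt0 absorb] := cone_absorb; exists r => // e p q e_gt0 qp_lt.
by split; apply: absorb; rewrite // distrC.
Qed.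

Lemma gap_vclose e p q p' q' :
  vclose e p q -> vclose e p' q' -> gap q q' <= gap p p' + 2 * e.
Proof.
move=> [Kqp _] [_ Kpq']; apply: gap_le; rewrite /above /=.
have -> : q + (gap p p' + 2 * e) *: v - q' =
  (q - p + e *: v) + (p + gap p p' *: v - p') + (p' - q' + e *: v) by mx_ring.
by apply: coneD => //; apply: coneD => //; apply: gap_above.
Qed.

Lemma osc_vclose e p q p' q' :
  vclose e p q -> vclose e p' q' -> osc q q' <= osc p p' + 4 * e.
Proof.
move=> c c'; have := gap_vclose c c'; have := gap_vclose c' c.
by rewrite /osc; lra.
Qed.

Variables (X : set 'rV[R]_n) (f : 'rV[R]_n -> 'rV[R]_n).
Variables (I : 'rV[R]_n -> set R) (phi : R -> 'rV[R]_n -> 'rV[R]_n).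
Hypothesis flowP : forward_complete_flow X f I phi.
Hypothesis strongly_monotone : forall xi1 xi2, X xi1 -> X xi2 -> ord_gt K xi1 xi2 ->
  forall t, 0 < t -> ord_gg K (phi t xi1) (phi t xi2).
Hypothesis Xv : forall x (lam : R), X x -> X (x + lam *: v).
Hypothesis flowv : forall xi (lam : R) t, X xi -> I xi t ->
  phi t (xi + lam *: v) = phi t xi + lam *: v.

Local Notation flowDv := (flowDv flowP flowv).

Lemma flow_mono x y t : X x -> X y -> K (x - y) -> 0 <= t -> K (phi t x - phi t y).
Proof.
move=> Xx Xy Kxy; rewrite le_eqVlt => /orP[/eqP <-|t_gt0].
  by rewrite !(flow0 flowP).
have [<-|xy_neq] := eqVneq x y.
  by rewrite subrr -(scale0r v); apply: coneZ cone_v.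
by apply: interior_subset; apply: strongly_monotone => //; split => //; apply/eqP.
Qed.

Lemma gap_flow_le x y t : X x -> X y -> 0 <= t -> gap (phi t x) (phi t y) <= gap x y.
Proof.
move=> Xx Xy t_ge0; apply: gap_le; rewrite /above /= -flowDv //.
by apply: flow_mono => //; [apply: Xv | apply: gap_above].
Qed.

Lemma osc_flow_le x y t : X x -> X y -> 0 <= t -> osc (phi t x) (phi t y) <= osc x y.
Proof. by move=> Xx Xy t_ge0; apply: lerD; apply: gap_flow_le. Qed.

Lemma gap_flow_lt x y t : X x -> X y -> 0 < t -> (forall k, y <> x + k *: v) ->
  gap (phi t x) (phi t y) < gap x y.
Proof.
move=> Xx Xy t_gt0 off_line; set m := gap x y.
have gt_xy : ord_gt K (x + m *: v) y by split; [apply: gap_above | move/esym/off_line].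
have := strongly_monotone (Xv m Xx) Xy gt_xy t_gt0.
rewrite /ord_gg flowDv ?ltW // => /nbhs_ballP [d d_gt0 ball_K].
set e := d / (`|v| + 1).
have e_gt0 : 0 < e by rewrite divr_gt0 // ltr_wpDl.
suff /gap_le gap_le_me : above (phi t x) (phi t y) (m - e).
  by apply: le_lt_trans gap_le_me _; rewrite ltrBlDr ltrDl.
apply: ball_K; rewrite -ball_normE /=.
have -> : phi t x + m *: v - phi t y - (phi t x + (m - e) *: v - phi t y) = e *: v by mx_ring.
rewrite normrZ gtr0_norm // /e mulrAC ltr_pdivrMr ?ltr_wpDl //.
by rewrite ltr_pM2l // ltrDl.
Qed.

Lemma osc_flow_ge_line x y t : X x -> X y -> 0 < t ->
  osc x y <= osc (phi t x) (phi t y) -> exists k, y = x + k *: v.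
Proof.
move=> Xx Xy t_gt0 osc_ge; apply: contrapT => off_line.
have lt_xy := gap_flow_lt Xx Xy t_gt0 (fun k e => off_line (ex_intro _ k e)).
have le_yx := gap_flow_le Xy Xx (ltW t_gt0).
by move: osc_ge; rewrite /osc; lra.
Qed.

Lemma vclose_flow e p q t : X p -> X q -> vclose e p q -> 0 <= t ->
  vclose e (phi t p) (phi t q).
Proof.
move=> Xp Xq [Kqp Kpq] t_ge0.
have shift x y : x - (y + - e *: v) = x - y + e *: v by mx_ring.
have mono x y : X x -> X y -> K (x - y + e *: v) -> K (phi t x - phi t y + e *: v).
  by move=> Xx Xy Kxy; rewrite -shift -flowDv //; apply: flow_mono; rewrite ?shift //; apply: Xv.
by split; apply: mono.
Qed.

Lemma osc_flow_shift_le xi s t t' : X xi -> 0 <= s -> 0 <= t -> t <= t' ->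
  osc (phi t' xi) (phi (t' + s) xi) <= osc (phi t xi) (phi (t + s) xi).
Proof.
move=> Xxi s_ge0 t_ge0 le_tt'; have dt_ge0 : 0 <= t' - t by rewrite subr_ge0.
have ts_ge0 : 0 <= t + s by rewrite addr_ge0.
have -> : phi t' xi = phi (t' - t) (phi t xi) by rewrite (flowD flowP) ?subrK.
have -> : phi (t' + s) xi = phi (t' - t) (phi (t + s) xi).
  by rewrite (flowD flowP) //; congr phi; ring.
by apply: osc_flow_le => //; apply: (flowX flowP).
Qed.

Hypothesis unit_v : dotv v v = 1.

Lemma proj_equilibrium_unique e1 e2 c1 c2 : X e1 -> X e2 ->
  dotv v e1 = 0 -> dotv v e2 = 0 -> f e1 = c1 *: v -> f e2 = c2 *: v -> e1 = e2.
Proof.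
move=> Xe1 Xe2 e1_perp e2_perp fe1 fe2.
have [k e2E] : exists k, e2 = e1 + k *: v.
  apply: (@osc_flow_ge_line e1 e2 1) => //.
  by rewrite (flow_drift flowP Xv flowv Xe1 fe1) ?(flow_drift flowP Xv flowv Xe2 fe2) // oscDv.
move: e2_perp; rewrite e2E dotvD dotvZ e1_perp unit_v add0r mulr1 => ->.
by rewrite scale0r addr0.
Qed.

Hypothesis closedX : closed X.
Variable xi : 'rV[R]_n.
Hypothesis Xxi : X xi.

Local Notation traj := (fun t => pi_v v (phi t xi)).

Lemma flow_traj a t : 0 <= t -> 0 <= a ->
  phi a (traj t) = phi (a + t) xi + (- dotv v (phi t xi)) *: v.
Proof.
move=> t_ge0 a_ge0; rewrite /pi_v -scaleNr flowDv ?(flowD flowP) //.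
exact: (flowX flowP).
Qed.

Lemma cluster_osc_approx p a s T e : cluster (traj @ +oo) p -> X p ->
  0 <= a -> 0 <= s -> 0 <= T -> 0 < e ->
  exists2 t, T <= t &
    osc (phi a p) (phi (a + s) p) <= osc (phi (a + t) xi) (phi (a + t + s) xi) + 4 * e /\
    osc (phi (a + t) xi) (phi (a + t + s) xi) <= osc (phi a p) (phi (a + s) p) + 4 * e.
Proof.
move=> clp Xp a_ge0 s_ge0 T_ge0 e_gt0; have [r r_gt0 norm_vclose] := vclose_norm.
have [t le_Tt near_p] := cluster_pinfty clp T (mulr_gt0 e_gt0 r_gt0).
have t_ge0 : 0 <= t := le_trans T_ge0 le_Tt.
have Xt : X (traj t) by rewrite /pi_v -scaleNr; apply/Xv/(flowX flowP).
have close_p := norm_vclose e p (traj t) e_gt0 near_p.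
have as_ge0 : 0 <= a + s by rewrite addr_ge0.
have close_a := vclose_flow Xp Xt close_p a_ge0.
have close_as := vclose_flow Xp Xt close_p as_ge0.
have := osc_vclose close_a close_as; have := osc_vclose (vcloseC close_a) (vcloseC close_as).
rewrite !flow_traj // [a + s + t]addrAC oscDv.
by exists t.
Qed.

Lemma cluster_osc_invariant p s : cluster (traj @ +oo) p -> X p -> 0 < s ->
  osc p (phi s p) <= osc (phi 1 p) (phi (1 + s) p).
Proof.
move=> clp Xp s_gt0; have s_ge0 := ltW s_gt0.
(* Both sides are 4(e/8)-close to samples of the nonincreasing function
   t |-> osc (phi t xi) (phi (t + s) xi), the left one at the later time. *)
apply/ler_addgt0Pr => e e_gt0; have e8_gt0 : 0 < e / 8 by rewrite divr_gt0.
have [t0 t0_ge0 [_ near_1]] := cluster_osc_approx clp Xp ler01 s_ge0 (lexx 0) e8_gt0.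
have t0S_ge0 : 0 <= 1 + t0 by rewrite addr_ge0.
have [t1 le_t1 [near_0 _]] := cluster_osc_approx clp Xp (lexx 0) s_ge0 t0S_ge0 e8_gt0.
have := osc_flow_shift_le Xxi s_ge0 t0S_ge0 le_t1.
move: near_0; rewrite (flow0 flowP) // !add0r.
by move: near_1; lra.
Qed.

Lemma cluster_plane p : cluster (traj @ +oo) p -> X p /\ dotv v p = 0.
Proof.
move=> clp; have closed_plane : closed (X `&` dotv v @^-1` [set 0]).
  apply: closedI closedX _; apply: preimage_closed; last exact: closed_eq.
  by move=> q _; apply: continuous_dotv.
apply: closed_plane => B /clp; apply; exists 0; split; first exact: num_real.
move=> t /ltW t_ge0; split; last exact: dotv_pi_v.
by rewrite /pi_v -scaleNr; apply/Xv/(flowX flowP).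
Qed.

Lemma cluster_equilibrium p : cluster (traj @ +oo) p -> exists c, f p = c *: v.
Proof.
move=> clp; have [Xp _] := cluster_plane clp.
apply: (span_f_of_flow flowP unit_v Xp) => s s_gt0.
apply: (@osc_flow_ge_line p (phi s p) 1) => //; first exact/(flowX flowP)/ltW.
rewrite (flowD flowP) //; last exact: ltW.
exact: cluster_osc_invariant.
Qed.

Lemma traj_cvg : (exists B, forall t, 0 <= t -> `|pi_v v (phi t xi)| <= B) ->
  exists2 e, [/\ X e, dotv v e = 0 & exists c, f e = c *: v] & traj @ +oo --> e.
Proof.
move=> [B traj_le]; have B_ge0 := le_trans (normr_ge0 _) (traj_le 0 (lexx 0)).
have traj_bounded C : B <= C -> (traj @ +oo) [set q | `|q| <= C].
  move=> le_BC; exists 0; split; first exact: num_real.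
  by move=> t /ltW t_ge0; apply: le_trans le_BC; apply: traj_le.
have [p [_ clp]] := compact_norm_le _ (traj_bounded B (lexx B)).
have [Xp p_perp] := cluster_plane clp.
have [c fp] := cluster_equilibrium clp.
exists p; first by split=> //; exists c.
apply: (@compact_cluster_set1 _ p (traj @ +oo) [set q | `|q| <= B + `|p| + 1]).
- exact: norm_hausdorff.
- exact: compact_norm_le.
- apply/nbhs_ballP; exists 1 => [|q]; first exact: ltr01.
  rewrite -ball_normE /= => lt_pq.
  have := ler_normB p (p - q); rewrite opprB addrCA subrr addr0 => le_q.
  by apply: le_trans le_q _; rewrite [B + _]addrC -addrA lerD2l; lra.
- by apply: traj_bounded; rewrite -addrA lerDl addr_ge0.
- apply/seteqP; split=> [q clq|q ->] //=.
  have [Xq q_perp] := cluster_plane clq; have [cq fq] := cluster_equilibrium clq.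
  exact: proj_equilibrium_unique fq fp.
Qed.

End StronglyMonotoneFlow.

Theorem theorem1 (R : realType) (n : nat) (X : set 'rV[R]_n)
  (f : 'rV[R]_n -> 'rV[R]_n) (I : 'rV[R]_n -> set R)
  (phi : R -> 'rV[R]_n -> 'rV[R]_n) (K : set 'rV[R]_n) (v : 'rV[R]_n) :
  closed X ->
  closure (interior X) = X ->
  locally_lipschitz X f ->
  forward_complete_flow X f I phi ->
  cone K -> closed K -> (exists x, interior K x) ->
  (forall xi1 xi2, X xi1 -> X xi2 -> ord_gt K xi1 xi2 ->
     forall t, 0 < t -> ord_gg K (phi t xi1) (phi t xi2)) ->
  interior K v -> dotv v v = 1 ->
  (forall x (lam : R), X x -> X (x + lam *: v)) ->
  (forall xi (lam : R) t, X xi -> I xi t ->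
     phi t (xi + lam *: v) = phi t xi + lam *: v) ->
  forall xi, X xi ->
  (exists M : R, forall t, 0 <= t -> `|pi_v v (phi t xi)| <= M) ->
  exists e : 'rV[R]_n,
    [/\ X e, dotv v e = 0, proj_field v f e = 0,
        pi_v v (phi t xi) @[t --> +oo] --> e &
        forall e' : 'rV[R]_n, X e' -> dotv v e' = 0 ->
          proj_field v f e' = 0 -> e' = e].
Proof.
(* The regularity of X and f only serves the existence and uniqueness of the
   flow, which [forward_complete_flow] already grants; v witnesses int K ≠ ∅. *)
move=> closedX _ _ flowP coneK closedK _ strongly_monotone Kv unit_v Xv flowv xi Xxi bounded.
have v_neq0 := unit_neq0 unit_v.
have [e [Xe e_perp [c fe]] cvg_e] := traj_cvg coneK closedK Kv v_neq0 flowP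
  strongly_monotone Xv flowv unit_v closedX Xxi bounded.
exists e; split => //.
  by rewrite proj_fieldE; apply/(pi_v_eq0 unit_v); exists c.
move=> e' Xe' e'_perp; rewrite proj_fieldE => /(pi_v_eq0 unit_v) [c' fe'].
exact: (proj_equilibrium_unique coneK closedK Kv v_neq0 flowP strongly_monotone Xv flowv
  unit_v Xe' Xe e'_perp e_perp fe' fe).
Qed.
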